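(* Let $M=(X,rk)$ be a matroid on a finite ground set $X$ with rank $r=rk(X)$, and let $i$ be a nonnegative integer. Then $d_1(M)>r-i$ if and only if \[[x^i]T_M(x,1)=\binom{|X|-i-1}{r-i}.\]
   Context: $T_M(x,y)=\sum_{A\subseteq X}(x-1)^{r-rk(A)}(y-1)^{|A|-rk(A)}$ is the Tutte polynomial of $M$, and $[x^i]f(x)$ denotes the coefficient of $x^i$. A circuit of $M$ is a set $C\subseteq X$ with $rk(C\setminus\{e\})=|C|-1=rk(C)$ for all $e\in C$. $d_1(M)$ is the minimum size of a circuit of $M$. *)

From mathcomp Require Import all_boot all_order all_algebra.
Set Implicit Arguments. Unset Strict Implicit. Unset Printing Implicit Defensive.
Import GRing.Theory Num.Theory.
Local Open Scope ring_scope.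

Definition is_matroid_rank (X : finType) (rk : {set X} -> nat) : Prop :=
  [/\ forall A : {set X}, (rk A <= #|A|)%N,
      forall A B : {set X}, A \subset B -> (rk A <= rk B)%N &
      forall A B : {set X}, (rk (A :|: B) + rk (A :&: B) <= rk A + rk B)%N].

Definition mrank (X : finType) (rk : {set X} -> nat) : nat := rk [set: X].

(* Tutte polynomial T_M(x,y) = sum_A (x-1)^(r - rk A) (y-1)^(|A| - rk A),
   as an element of Z[x][y]: outer variable y, inner variable x. *)
Definition tutte (X : finType) (rk : {set X} -> nat) : {poly {poly int}} :=
  \sum_(A : {set X})
     (((('X - 1) ^+ (mrank rk - rk A)%N)%:P) * ('X - 1) ^+ (#|A| - rk A)%N).

Definition tutte_x1 (X : finType) (rk : {set X} -> nat) : {poly int} :=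
  (tutte rk).[1].

(* Circuit: rk(C \ {e}) = |C| - 1 = rk(C) for all e in C (integer arithmetic,
   so the empty set is not a circuit). *)
Definition is_circuit (X : finType) (rk : {set X} -> nat) (C : {set X}) : bool :=
  (#|C|%:Z - 1 == (rk C)%:Z) &&
  [forall e in C, (rk (C :\ e))%:Z == #|C|%:Z - 1].

(* d_1(M) = minimum size of a circuit; if M has no circuit we use the value
   |X| + 1, which plays the role of +infinity (every r - i is <= |X|). *)
Definition d1 (X : finType) (rk : {set X} -> nat) : nat :=
  \big[minn/#|X|.+1]_(C : {set X} | is_circuit rk C) #|C|.

(* At y = 1 only the independent sets survive in the Tutte polynomial:
   T_M(x,1) = sum over independent A of (x-1)^(r-|A|), and the same sum over the
   subsets of E is T_(M|E)(x,1).  Removing an element e of E gives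
   T_(M|E) = T_(M|E-e) for a loop, x T_(M|E-e) for a coloop and
   T_(M|E-e) + T_((M/e)|E-e) otherwise.  With Pascal's rule, induction on |E|
   shows that for i <= rk E
     [x^i] T_(M|E)(x,1) <= C(|E|-i-1, rk E-i),
   with equality iff every subset of E of size at most rk E - i is independent.
   Since minimal dependent sets are circuits, for E = X this equality condition
   says that every circuit has more than r - i elements. *)

From mathcomp Require Import all_boot all_order all_algebra.
From mathcomp Require Import zify.
Import Order.TTheory GRing.Theory Num.Theory.
Set Implicit Arguments.
Unset Strict Implicit.
Unset Printing Implicit Defensive.
Local Open Scope ring_scope.

Lemma sum_subsets_setD1 (X : finType) (V : nmodType) (F : {set X} -> V)
    (E : {set X}) (e : X) :
  e \in E ->
  \sum_(A : {set X} | A \subset E) F A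
  = \sum_(A : {set X} | A \subset E :\ e) (F A + F (e |: A)).
Proof.
move=> eE; rewrite big_split /= (bigID (fun A : {set X} => e \in A)) /= addrC.
congr (_ + _); first by apply: eq_bigl => A; rewrite subsetD1.
rewrite (reindex_onto (fun A : {set X} => e |: A) (fun A => A :\ e)) /=; last first.
  by move=> A /andP[_ eA]; apply: setD1K.
apply: eq_bigl => A; rewrite subsetD1 setU11 andbT subUset sub1set eE /=.
case: (boolP (e \in A)) => eA /=; last by rewrite setU1K // eqxx andbT.
by congr (_ && _); apply: contraTF eA => /eqP <-; rewrite setD11.
Qed.

Lemma subset_of_card (X : finType) (A : {set X}) (k : nat) :
  (k <= #|A|)%N -> exists2 B : {set X}, B \subset A & #|B| = k.
Proof.
case/card_geqP=> s [uniq_s size_s sub_s]; exists [set x in s].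
  by apply/subsetP => x; rewrite inE => /sub_s.
by rewrite cardsE (card_uniqP uniq_s).
Qed.

Lemma coef_XsubC_exp_size (R : nzRingType) (a : R) (m : nat) :
  (('X - a%:P) ^+ m)`_m = 1.
Proof.
have /monicP := monic_exp m (monicXsubC a).
by rewrite lead_coefE size_exp_XsubC.
Qed.

Lemma coef_XsubC_exp_gt (R : nzRingType) (a : R) (m j : nat) :
  (m < j)%N -> (('X - a%:P) ^+ m)`_j = 0.
Proof. by move=> lt_mj; apply: nth_default; rewrite size_exp_XsubC. Qed.

Lemma binS_subn (m r i : nat) : (i < r <= m)%N ->
  'C(m.+1 - i - 1, r - i) = ('C(m - i - 1, r - i) + 'C(m - i - 1, r.-1 - i))%N.
Proof.
move=> /andP[lt_ir le_rm].
have -> : (m.+1 - i - 1 = (m - i - 1).+1)%N by lia.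
have -> : (r - i = (r.-1 - i).+1)%N by lia.
by rewrite binS.
Qed.

Definition indep (X : finType) (rk : {set X} -> nat) (A : {set X}) : bool :=
  rk A == #|A|.

Definition small_sets_indep (X : finType) (rk : {set X} -> nat)
    (E : {set X}) (k : nat) : bool :=
  [forall A : {set X}, (A \subset E) && (#|A| <= k)%N ==> indep rk A].

Definition contract (X : finType) (rk : {set X} -> nat) (e : X) (A : {set X}) :
    nat :=
  (rk (e |: A) - rk [set e])%N.

Definition indep_poly (X : finType) (rk : {set X} -> nat) (E : {set X}) :
    {poly int} :=
  \sum_(A : {set X} | A \subset E)
    (if indep rk A then ('X - 1) ^+ (rk E - #|A|) else 0).

Definition coef_bound (X : finType) (rk : {set X} -> nat) (E : {set X}) (i : nat) :
    Prop :=
  (indep_poly rk E)`_i <= ('C(#|E| - i - 1, rk E - i))%:Z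
    ?= iff small_sets_indep rk E (rk E - i).

Lemma small_sets_indepP (X : finType) (rk : {set X} -> nat)
    (E : {set X}) (k : nat) :
  reflect (forall A : {set X}, A \subset E -> (#|A| <= k)%N -> indep rk A)
          (small_sets_indep rk E k).
Proof.
apply: (iffP forallP) => [h A sA cA | h A].
  by have /implyP := h A; apply; rewrite sA.
by apply/implyP => /andP[]; apply: h.
Qed.

Section MatroidRank.

Variables (X : finType) (rk : {set X} -> nat).
Hypothesis rkM : is_matroid_rank rk.

Lemma rk_card (A : {set X}) : (rk A <= #|A|)%N.
Proof. by case: rkM. Qed.

Lemma rk_subset (A B : {set X}) : A \subset B -> (rk A <= rk B)%N.
Proof. by case: rkM => _ + _; apply. Qed.

Lemma rk_submod (A B : {set X}) : (rk (A :|: B) + rk (A :&: B) <= rk A + rk B)%N.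
Proof. by case: rkM. Qed.

Lemma rk0 : rk set0 = 0%N.
Proof. by apply/eqP; rewrite -leqn0 -(cards0 X) rk_card. Qed.

Lemma rk_set1 (e : X) : (rk [set e] <= 1)%N.
Proof. by rewrite -(cards1 e) rk_card. Qed.

Lemma rk_setU1 (e : X) (A : {set X}) : (rk A <= rk (e |: A) <= rk A + rk [set e])%N.
Proof. by rewrite rk_subset ?subsetUr //=; have := rk_submod [set e] A; lia. Qed.

Lemma rk_setU1_submod (e : X) (A B : {set X}) :
  A \subset B -> (rk (e |: B) + rk A <= rk (e |: A) + rk B)%N.
Proof.
move=> sAB; have := rk_submod (e |: A) B.
rewrite -setUA (setUidPr sAB).
have : (rk A <= rk ((e |: A) :&: B))%N by rewrite rk_subset // subsetI subsetUr.
lia.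
Qed.

Lemma indep_subset (A B : {set X}) : indep rk B -> A \subset B -> indep rk A.
Proof.
rewrite /indep => /eqP rkB sAB; have := rk_submod A (B :\: A).
rewrite setDE setUIr setUCr setIT (setUidPr sAB) setICA setICr setI0 rk0 -setDE.
have := rk_card A; have := rk_card (B :\: A); rewrite cardsD (setIidPr sAB).
have := subset_leq_card sAB; lia.
Qed.

Lemma rk_setU1_loop (e : X) (A : {set X}) : rk [set e] = 0%N -> rk (e |: A) = rk A.
Proof. by have := rk_setU1 e A; lia. Qed.

Lemma rk_setU1_coloop (E A : {set X}) (e : X) :
  e \in E -> (rk (E :\ e) < rk E)%N -> A \subset E :\ e -> rk (e |: A) = (rk A).+1.
Proof.
move=> eE coloop sA; have := rk_setU1_submod e sA; rewrite setD1K //.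
have := rk_setU1 e A; have := rk_set1 e; lia.
Qed.

Lemma contract_matroid (e : X) : is_matroid_rank (contract rk e).
Proof.
have rk_e_le A : (rk [set e] <= rk (e |: A))%N by rewrite rk_subset ?subsetUl.
rewrite /contract; split.
- by move=> A; have := rk_setU1 e A; have := rk_card A; lia.
- move=> A B sAB; have : (rk (e |: A) <= rk (e |: B))%N by rewrite rk_subset ?setUS.
  lia.
- move=> A B; have := rk_submod (e |: A) (e |: B).
  rewrite -setUUr -setUIr; have := rk_e_le (A :&: B); have := rk_e_le (A :|: B).
  lia.
Qed.

Lemma coef_indep_poly_rk (E : {set X}) : (indep_poly rk E)`_(rk E) = 1.
Proof.
rewrite coef_sum (bigD1 set0) ?sub0set //= /indep rk0 cards0 eqxx subn0.
rewrite -polyC1 coef_XsubC_exp_size big1 ?addr0 // => A /andP[sAE nA0].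
case: eqP => [rkA|_]; last by rewrite coef0.
rewrite coef_XsubC_exp_gt //; have := rk_subset sAE.
by rewrite rkA; move: nA0; rewrite -card_gt0; lia.
Qed.

Lemma coef_indep_poly_gt (E : {set X}) (j : nat) :
  (rk E < j)%N -> (indep_poly rk E)`_j = 0.
Proof.
move=> lt_rk_j; rewrite coef_sum big1 // => A _.
by case: ifP => _; rewrite ?coef0 // -polyC1 coef_XsubC_exp_gt //; lia.
Qed.

Lemma indep_poly_loop (E : {set X}) (e : X) :
  e \in E -> rk [set e] = 0%N -> indep_poly rk E = indep_poly rk (E :\ e).
Proof.
move=> eE loop_e; have rkE : rk E = rk (E :\ e) by rewrite -{1}(setD1K eE) rk_setU1_loop.
rewrite /indep_poly (sum_subsets_setD1 _ eE) rkE; apply: eq_bigr => A.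
rewrite subsetD1 => /andP[_ eNA].
have -> : indep rk (e |: A) = false.
  by rewrite /indep rk_setU1_loop // cardsU1 eNA; have := rk_card A; lia.
by rewrite addr0.
Qed.

Lemma indep_poly_coloop (E : {set X}) (e : X) :
  e \in E -> (rk (E :\ e) < rk E)%N ->
  indep_poly rk E = 'X * indep_poly rk (E :\ e).
Proof.
move=> eE coloop_e; have := rk_setU1_coloop eE coloop_e (subxx _).
rewrite setD1K // => rkE.
rewrite /indep_poly (sum_subsets_setD1 _ eE) mulr_sumr; apply: eq_bigr => A sA.
have := sA; rewrite subsetD1 => /andP[_ eNA].
rewrite /indep (rk_setU1_coloop eE coloop_e sA) cardsU1 eNA eqSS.
case: eqP => [rkA|_]; last by rewrite addr0 mulr0.
have : (#|A| <= rk (E :\ e))%N by rewrite -rkA rk_subset.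
move=> le_A_rk; rewrite add1n rkE subSS subSn // exprS mulrBl mul1r.
by rewrite -polyC1 subrK.
Qed.

Lemma indep_poly_delcon (E : {set X}) (e : X) :
  e \in E -> rk [set e] = 1%N -> rk (E :\ e) = rk E ->
  indep_poly rk E = indep_poly rk (E :\ e) + indep_poly (contract rk e) (E :\ e).
Proof.
move=> eE rk_e rkEe; rewrite /indep_poly (sum_subsets_setD1 _ eE) big_split rkEe /=.
congr (_ + _); apply: eq_bigr => A; rewrite subsetD1 => /andP[_ eNA].
have rk_eA : (1 <= rk (e |: A))%N by rewrite -rk_e rk_subset ?subsetUl.
rewrite /indep /contract setD1K // rk_e cardsU1 eNA.
have -> : (rk (e |: A) == 1 + #|A|) = (rk (e |: A) - 1 == #|A|)%N.
  by apply/eqP/eqP; lia.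
by have -> : (rk E - (1 + #|A|) = rk E - 1 - #|A|)%N by lia.
Qed.

Lemma small_sets_indep0 (E : {set X}) : small_sets_indep rk E 0.
Proof.
apply/small_sets_indepP => A _; rewrite leqn0 cards_eq0 => /eqP ->.
by rewrite /indep rk0 cards0.
Qed.

Lemma small_sets_indep_loop (E : {set X}) (e : X) (k : nat) :
  e \in E -> rk [set e] = 0%N -> (0 < k)%N -> small_sets_indep rk E k = false.
Proof.
move=> eE loop_e k_gt0; apply/negbTE/small_sets_indepP => /(_ [set e]).
by rewrite sub1set eE cards1 /indep loop_e cards1 => /(_ isT k_gt0).
Qed.

Lemma small_sets_indep_coloop (E : {set X}) (e : X) (k : nat) :
  e \in E -> (rk (E :\ e) < rk E)%N ->
  small_sets_indep rk E k = small_sets_indep rk (E :\ e) k.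
Proof.
move=> eE coloop_e; apply/small_sets_indepP/small_sets_indepP => h A sA cA.
  by apply: h cA; apply: subset_trans sA (subD1set _ _).
case: (boolP (e \in A)) => eA; last by apply: h cA; rewrite subsetD1 sA.
have sAe : A :\ e \subset E :\ e by apply: setSD.
have cardA : #|A| = #|A :\ e|.+1 by rewrite (cardsD1 e) eA.
have /eqP indep_Ae : indep rk (A :\ e) by apply: h sAe _; lia.
by rewrite /indep -{1}(setD1K eA) (rk_setU1_coloop eE coloop_e sAe) indep_Ae cardA.
Qed.

Lemma small_sets_indep_delcon (E : {set X}) (e : X) (k : nat) :
  e \in E -> rk [set e] = 1%N -> (0 < k)%N ->
  small_sets_indep rk E k =
  small_sets_indep rk (E :\ e) k && small_sets_indep (contract rk e) (E :\ e) k.-1.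
Proof.
move=> eE rk_e k_gt0; apply/small_sets_indepP/andP => [small_E | ].
  split; apply/small_sets_indepP => A; rewrite subsetD1 => /andP[sA eNA] cA.
    exact: small_E.
  have sEA : e |: A \subset E by rewrite subUset sub1set eE.
  have /eqP rk_eA : indep rk (e |: A).
    by apply: small_E sEA _; rewrite cardsU1 eNA add1n; lia.
  by rewrite /indep /contract rk_eA rk_e cardsU1 eNA add1n subn1.
move=> [/small_sets_indepP small_del /small_sets_indepP small_con] A sA cA.
case: (boolP (e \in A)) => eA.
  have cardA : #|A| = #|A :\ e|.+1 by rewrite (cardsD1 e) eA.
  have rk_A : (1 <= rk A)%N by rewrite -rk_e rk_subset ?sub1set.
  have /eqP : indep (contract rk e) (A :\ e).
    by apply: small_con; [exact: setSD | lia].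
  by rewrite /contract setD1K // rk_e => rkA; apply/eqP; lia.
by apply: small_del cA; rewrite subsetD1 sA.
Qed.

Lemma small_sets_indep_gt_rk (F : {set X}) (k : nat) :
  (rk F < k)%N -> small_sets_indep rk F k = indep rk F.
Proof.
move=> lt_rk_k; apply/small_sets_indepP/idP => [h | indepF A sA _]; last first.
  exact: indep_subset indepF sA.
have [le_F_rk | lt_rk_F] := leqP #|F| (rk F).
  by apply/eqP; have := rk_card F; lia.
have [B sBF cardB] := subset_of_card lt_rk_F.
have /eqP rkB : indep rk B by apply: h; rewrite // cardB.
by have := rk_subset sBF; rewrite rkB cardB ltnn.
Qed.

Lemma coef_bound_rk (E : {set X}) : coef_bound rk E (rk E).
Proof.
rewrite /coef_bound coef_indep_poly_rk subnn bin0.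
by apply/leif_refl; apply: small_sets_indep0.
Qed.

Lemma coef_bound_loop (E : {set X}) (e : X) (i : nat) :
  e \in E -> rk [set e] = 0%N -> (i < rk E)%N ->
  coef_bound rk (E :\ e) i -> coef_bound rk E i.
Proof.
move=> eE loop_e lt_i_rk.
have rkEe : rk (E :\ e) = rk E by rewrite -{2}(setD1K eE) rk_setU1_loop.
have cardE : #|E| = #|E :\ e|.+1 by rewrite (cardsD1 e) eE.
have le_rk_card := rk_card (E :\ e).
rewrite /coef_bound rkEe (indep_poly_loop eE loop_e) cardE binS_subn; last first.
  by rewrite lt_i_rk -rkEe.
rewrite PoszD (small_sets_indep_loop eE loop_e) ?subn_gt0 // => bound_del.
rewrite -[X in X <= _ ?= iff _]addr0 -(andbF (small_sets_indep rk (E :\ e) (rk E - i))).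
by apply: leifD bound_del _; apply/leifP; rewrite ltz_nat bin_gt0; lia.
Qed.

Lemma coef_bound_coloop0 (E : {set X}) (e : X) :
  e \in E -> (rk (E :\ e) < rk E)%N -> coef_bound rk E 0.
Proof.
move=> eE coloop_e.
have rkE : rk E = (rk (E :\ e)).+1.
  by rewrite -{1}(setD1K eE) (rk_setU1_coloop eE coloop_e).
have cardE : #|E| = #|E :\ e|.+1 by rewrite (cardsD1 e) eE.
have le_rk_card := rk_card (E :\ e).
rewrite /coef_bound (indep_poly_coloop eE coloop_e) coefXM eqxx !subn0.
rewrite (small_sets_indep_coloop _ eE coloop_e) small_sets_indep_gt_rk; last first.
  by rewrite rkE.
apply/leifP; rewrite /indep; case: eqP => [rkEe | ne_rk_card].
  by rewrite bin_small //; lia.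
by rewrite ltz_nat bin_gt0; lia.
Qed.

Lemma coef_bound_coloop (E : {set X}) (e : X) (i : nat) :
  e \in E -> (rk (E :\ e) < rk E)%N -> (0 < i)%N ->
  coef_bound rk (E :\ e) i.-1 -> coef_bound rk E i.
Proof.
move=> eE coloop_e i_gt0.
have rkE : rk E = (rk (E :\ e)).+1.
  by rewrite -{1}(setD1K eE) (rk_setU1_coloop eE coloop_e).
have cardE : #|E| = #|E :\ e|.+1 by rewrite (cardsD1 e) eE.
rewrite /coef_bound (indep_poly_coloop eE coloop_e).
rewrite coefXM (negbTE (lt0n_neq0 i_gt0)).
rewrite (small_sets_indep_coloop _ eE coloop_e) rkE cardE.
have -> : (#|E :\ e|.+1 - i - 1 = #|E :\ e| - i.-1 - 1)%N by lia.
by have -> : ((rk (E :\ e)).+1 - i = rk (E :\ e) - i.-1)%N by lia.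
Qed.

Lemma coef_bound_delcon (E : {set X}) (e : X) (i : nat) :
  e \in E -> rk [set e] = 1%N -> rk (E :\ e) = rk E -> (i < rk E)%N ->
  coef_bound rk (E :\ e) i -> coef_bound (contract rk e) (E :\ e) i ->
  coef_bound rk E i.
Proof.
move=> eE rk_e rkEe lt_i_rk.
have rk_con : contract rk e (E :\ e) = (rk E).-1.
  by rewrite /contract setD1K // rk_e subn1.
have cardE : #|E| = #|E :\ e|.+1 by rewrite (cardsD1 e) eE.
have le_rk_card := rk_card (E :\ e).
rewrite /coef_bound rkEe rk_con => bound_del bound_con.
rewrite (indep_poly_delcon eE rk_e) ?rkEe // coefD cardE binS_subn; last first.
  by rewrite lt_i_rk -rkEe.
rewrite PoszD (small_sets_indep_delcon eE rk_e) ?subn_gt0 //.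
have -> : (rk E - i).-1 = ((rk E).-1 - i)%N by lia.
exact: leifD.
Qed.

End MatroidRank.

Lemma coef_indep_poly_bound (X : finType) (rk : {set X} -> nat) (E : {set X}) (i : nat) :
  is_matroid_rank rk -> (i <= rk E)%N -> coef_bound rk E i.
Proof.
move cardE: #|E| => n; elim: n rk E i cardE => [|n IH] rk E i cardE rkM le_i_rk.
  have -> : i = rk E by have := rk_card rkM E; lia.
  exact: coef_bound_rk.
have [-> | ne_i_rk] := eqVneq i (rk E); first exact: coef_bound_rk.
have {le_i_rk ne_i_rk} lt_i_rk : (i < rk E)%N by rewrite ltn_neqAle ne_i_rk.
have [e eE] : exists e, e \in E by apply/set0Pn; rewrite -card_gt0 cardE.
have cardEe : #|E :\ e| = n by move: cardE; rewrite (cardsD1 e) eE => -[].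
have IH_del j : (j <= rk (E :\ e))%N -> coef_bound rk (E :\ e) j by apply: IH.
have := rk_setU1 rkM e (E :\ e); rewrite setD1K // => rk_Ee.
have [loop_e | rk_e] : rk [set e] = 0%N \/ rk [set e] = 1%N.
- by have := rk_set1 rkM e; lia.
- by apply: (coef_bound_loop rkM eE loop_e lt_i_rk); apply: IH_del; lia.
have [coloop_e | rkEe] : (rk (E :\ e) < rk E)%N \/ rk (E :\ e) = rk E by lia.
  case: i lt_i_rk => [|i] lt_i_rk; first exact: (coef_bound_coloop0 rkM eE coloop_e).
  by apply: (coef_bound_coloop rkM eE coloop_e) => //; apply: IH_del; lia.
apply: (coef_bound_delcon rkM eE rk_e rkEe lt_i_rk).
  by apply: IH_del; rewrite rkEe ltnW.
apply: IH cardEe (contract_matroid rkM e) _.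
by rewrite /contract setD1K // rk_e; lia.
Qed.

Lemma tutte_x1_indep_poly (X : finType) (rk : {set X} -> nat) :
  is_matroid_rank rk -> tutte_x1 rk = indep_poly rk [set: X].
Proof.
move=> rkM; rewrite /tutte_x1 /tutte horner_sum /indep_poly.
apply: eq_big => [A | A _]; first by rewrite subsetT.
rewrite hornerCM !hornerE subrr expr0n subn_eq0 /mrank /indep eqn_leq rk_card //=.
case: (boolP (#|A| <= rk A)%N) => [le_card_rk | _]; last by rewrite mulr0.
have rkA : rk A = #|A| by apply/eqP; rewrite eqn_leq rk_card.
by rewrite rkA mulr1.
Qed.

Lemma circuit_dep (X : finType) (rk : {set X} -> nat) (C : {set X}) :
  is_circuit rk C -> ~~ indep rk C.
Proof. by case/andP => /eqP rkC _; apply/eqP; lia. Qed.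

Lemma dep_has_circuit (X : finType) (rk : {set X} -> nat) (A : {set X}) :
  is_matroid_rank rk -> ~~ indep rk A ->
  exists2 C : {set X}, C \subset A & is_circuit rk C.
Proof.
move=> rkM depA; pose dep_sub (B : {set X}) := (B \subset A) && ~~ indep rk B.
have dep_subA : dep_sub A by rewrite /dep_sub subxx.
case: (arg_minnP (fun B : {set X} => #|B|) dep_subA) => C /andP[sCA depC] minC.
exists C => //.
have indep_Cx x : x \in C -> indep rk (C :\ x).
  move=> xC; apply: contraT => depCx.
  have := minC (C :\ x); rewrite /dep_sub depCx (subset_trans (subD1set C x) sCA).
  by rewrite (cardsD1 x C) xC add1n ltnn => /(_ isT).
have [x xC] : exists x, x \in C.
  by apply/set0Pn; apply: contraNneq depC => ->; rewrite /indep rk0 ?cards0.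
have cardC y : y \in C -> #|C| = #|C :\ y|.+1 by move=> yC; rewrite (cardsD1 y C) yC.
have /eqP rkCx := indep_Cx x xC.
have := rk_card rkM C; have := rk_subset rkM (subD1set C x); move/eqP: depC.
rewrite (cardC x xC) rkCx => depC le_rk le_card.
apply/andP; split; first by rewrite (cardC x xC); apply/eqP; lia.
apply/forall_inP => y yC; have /eqP := indep_Cx y yC.
by rewrite (cardC y yC) => rkCy; apply/eqP; lia.
Qed.

Lemma small_sets_indep_circuit (X : finType) (rk : {set X} -> nat) (k : nat) :
  is_matroid_rank rk ->
  small_sets_indep rk [set: X] k
  <-> (forall C : {set X}, is_circuit rk C -> (k < #|C|)%N).
Proof.
move=> rkM; split => [/small_sets_indepP small_indep C circC | circ_gt].
  by rewrite ltnNge; apply: contraNN (circuit_dep circC); apply: small_indep.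
apply/small_sets_indepP => A _ le_A_k; apply: contraT => depA.
have [C sCA circC] := dep_has_circuit rkM depA.
by have := circ_gt C circC; have := subset_leq_card sCA; lia.
Qed.

Lemma ltn_d1 (X : finType) (rk : {set X} -> nat) (k : nat) : (k <= #|X|)%N ->
  (k < d1 rk)%N <-> (forall C : {set X}, is_circuit rk C -> (k < #|C|)%N).
Proof.
move=> le_k_X; rewrite /d1 -minEnat.
apply: (iff_trans (iff_sym (rwP (@bigmin_gtP _ nat _ _ k _ _)))).
by split => [[] | circ_gt].
Qed.

Theorem theorem3p5 (X : finType) (rk : {set X} -> nat)
  (HM : is_matroid_rank rk) (i : nat) :
  ((mrank rk)%:Z - i%:Z < (d1 rk)%:Z)
  <-> (tutte_x1 rk)`_i
      = (if (i <= mrank rk)%N then ('C(#|X| - i - 1, mrank rk - i))%:Z else 0).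
Proof.
rewrite tutte_x1_indep_poly // /mrank.
have le_rk_X : (rk [set: X] <= #|X|)%N by rewrite -cardsT rk_card.
have [le_i_rk | lt_rk_i] := leqP i (rk [set: X]); last first.
  by rewrite coef_indep_poly_gt //; split => // _; lia.
have [_ coef_eq] := coef_indep_poly_bound HM le_i_rk.
rewrite cardsT in coef_eq.
apply: (@iff_trans _ (rk [set: X] - i < d1 rk)%N); first by split; lia.
apply: (iff_trans (ltn_d1 _ _)); first lia.
apply: (iff_trans (iff_sym (small_sets_indep_circuit _ HM))).
by rewrite -coef_eq; split => /eqP.
Qed.
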